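(* Let $\tau$ be a primitive substitution and $u$ a non-empty prefix of $X_\tau$. Then $\tau$ and $\tau_u$ have the same eigenvalues except perhaps $0$ and roots of unity: a complex number which is neither $0$ nor a root of unity is an eigenvalue of $M_\tau$ if and only if it is an eigenvalue of $M_{\tau_u}$.
   Context: A substitution is a triple $(\tau,A,a)$: $A$ a finite alphabet, $\tau:A\to A^+$ a morphism (extended by concatenation), $a\in A$ with $\tau(a)$ starting with $a$; its fixed point $X_\tau$ is the unique sequence starting with $a$ with $\tau(X_\tau)=X_\tau$. Its matrix $M_\tau$ has $(i,j)$ entry the number of occurrences of $i$ in $\tau(j)$. $\tau$ is primitive if some power of $M_\tau$ is positive; then $X_\tau$ is uniformly recurrent. For a non-empty prefix $u$ of $X_\tau$, a return word on $u$ is a factor $X_{[i,j-1]}$ where $i<j$ are successive occurrences of $u$; there are finitely many, and $X_\tau$ factors uniquely as a concatenation of return words. Enumerating return words in order of first appearance gives a bijection $\Theta_u$ from $R_u=\{1,\dots,N\}$ to the return words, extended to an injective morphism $R_u^*\to A^*$. The return substitution $\tau_u:R_u\to R_u^+$ is the unique morphism with $\Theta_u\tau_u=\tau\Theta_u$. *)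

From mathcomp Require Import all_boot all_order all_algebra all_field.
Set Implicit Arguments. Unset Strict Implicit. Unset Printing Implicit Defensive.
Import GRing.Theory Num.Theory.
Local Open Scope ring_scope.

Definition subst_word (A B : Type) (tau : A -> seq B) (w : seq A) : seq B :=
  flatten (map tau w).

Definition subst_mx (A : finType) (tau : A -> seq A) : 'M[algC]_(#|A|) :=
  \matrix_(i, j) ((count_mem (enum_val i) (tau (enum_val j)))%:R : algC).

Definition primitive (A : finType) (tau : A -> seq A) : Prop :=
  exists k : nat, forall i j, 0 < ((subst_mx tau) ^+ k) i j.

Definition pref (A : Type) (X : nat -> A) (n : nat) : seq A := mkseq X n.

(* X is a fixed point of tau starting with a: X_0 = a and tau(X) = X,
   i.e. tau of every prefix of X is again a prefix of X. *)
Definition is_fixed_point (A : Type) (tau : A -> seq A) (a : A) (X : nat -> A)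
  : Prop :=
  X 0%N = a /\
  forall n, subst_word tau (pref X n) = pref X (size (subst_word tau (pref X n))).

Definition factor (A : Type) (X : nat -> A) (i n : nat) : seq A :=
  mkseq (fun k => X (i + k)%N) n.

Definition occurs_at (A : Type) (X : nat -> A) (u : seq A) (i : nat) : Prop :=
  factor X i (size u) = u.

Definition return_word_at (A : Type) (X : nat -> A) (u : seq A) (i : nat)
  (w : seq A) : Prop :=
  occurs_at X u i /\
  exists j, [/\ (i < j)%N, occurs_at X u j,
     (forall k, (i < k < j)%N -> ~ occurs_at X u k) & w = factor X i (j - i)].

Definition is_return_word (A : Type) (X : nat -> A) (u : seq A) (w : seq A)
  : Prop := exists i, return_word_at X u i w.

(* Theta : 'I_N -> seq A enumerates (bijectively) the return words on u,
   in order of first appearance in X. *)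
Definition return_enumeration (A : Type) (X : nat -> A) (u : seq A) (N : nat)
  (Theta : 'I_N -> seq A) : Prop :=
  [/\ forall k, is_return_word X u (Theta k),
      forall w, is_return_word X u w -> exists k, Theta k = w,
      injective Theta &
      forall k l : 'I_N, (k < l)%N -> forall i, return_word_at X u i (Theta l) ->
         exists2 i', (i' < i)%N & return_word_at X u i' (Theta k)].

Definition return_substitution (A : Type) (tau : A -> seq A) (N : nat)
  (Theta : 'I_N -> seq A) (tau_u : 'I_N -> seq 'I_N) : Prop :=
  forall k, tau_u k != [::] /\
            subst_word Theta (tau_u k) = subst_word tau (Theta k).

Definition is_root_of_unity (x : algC) : Prop := exists n : nat, (0 < n)%N /\ x ^+ n = 1.

From mathcomp Require Import all_boot all_order all_algebra all_field.
From mathcomp Require Import zify ring.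
Set Implicit Arguments. Unset Strict Implicit. Unset Printing Implicit Defensive.
Import GRing.Theory Num.Theory.
Local Open Scope ring_scope.

(* Let L be the matrix of letter counts of the return words, so that
   M_tau L = L M_{tau_u}.  If x M_tau = lam x, then either x L is an eigenvector
   of M_{tau_u}, or x L = 0 and lam^n x = x D_n for integer matrices D_n bounded
   independently of n, since M_tau^n = L G_n + D_n: the image tau^n(b) of a
   letter is a factor X_[s, e) of the fixed point, and a prefix of X is a
   concatenation of return words followed by a word shorter than the longest
   return word.  In the second case lam^n takes finitely many values, so lam is
   0 or a root of unity.
   The converse is the same argument for the transposed matrices: the return
   words inside tau^n(Theta k) are those starting inside the images tau^n(b) of
   the letters b of Theta k, and the number of return words of a given type
   starting inside tau^n(b) depends on b alone up to an error |u|, the only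
   return words that cannot be read off the factor tau^n(b) being those that
   overhang its end. *)

(* Integer matrices with entries in [-C, C], encoded over a finite type. *)
Definition centered_mx (C p q : nat) (T : 'M['I_(C.*2.+1)]_(p, q)) : 'M[algC]_(p, q) :=
  map_mx (fun t : 'I_(C.*2.+1) => (t : nat)%:R - C%:R) T.

Lemma mulmx_exp_eigen (p : nat) (P : 'M[algC]_p) (x : 'rV_p) lam n :
  x *m P = lam *: x -> x *m P ^+ n = lam ^+ n *: x.
Proof.
move=> xP; elim: n => [|n IH]; first by rewrite expr0 mulmx1 scale1r.
by rewrite exprSr mulmxA IH -scalemxAl xP scalerA exprSr.
Qed.

Lemma root_of_unity_exp_eq (lam : algC) n m :
  lam != 0 -> (n < m)%N -> lam ^+ n = lam ^+ m -> is_root_of_unity lam.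
Proof.
move=> lam0 lt_nm Enm; exists (m - n)%N; split; first by rewrite subn_gt0.
apply: (mulfI (expf_neq0 n lam0)); rewrite -exprD subnKC; last exact: ltnW.
by rewrite Enm mulr1.
Qed.

Lemma bounded_orbit_root_of_unity (p C : nat) (x : 'rV[algC]_p) (lam : algC) :
  x != 0 -> lam != 0 ->
  (forall n, exists T : 'M['I_(C.*2.+1)]_p, lam ^+ n *: x = x *m centered_mx T) ->
  is_root_of_unity lam.
Proof.
move=> x0 lam0 bounded.
pose K := #|{: 'M['I_(C.*2.+1)]_p}|.
have pickT (n : 'I_K.+1) :
    {T : 'M['I_(C.*2.+1)]_p | lam ^+ n *: x == x *m centered_mx T}.
  by apply: sig_eqW; have [T /eqP ET] := bounded n; exists T.
pose f n := sval (pickT n).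
have fP (n : 'I_K.+1) : lam ^+ n *: x = x *m centered_mx (f n).
  exact/eqP/(svalP (pickT n)).
have /injectivePn [n [m neq_nm Efnm]] : ~~ injectiveb f.
  by apply/injectiveP => /leq_card; rewrite card_ord ltnn.
have Enm : lam ^+ n = lam ^+ m.
  have /eqP : (lam ^+ n - lam ^+ m) *: x = 0 by rewrite scalerBl !fP Efnm subrr.
  by rewrite scaler_eq0 (negbTE x0) orbF subr_eq0 => /eqP.
case: (ltngtP n m) => [lt|lt|/val_inj eq_nm].
- exact: root_of_unity_exp_eq lt Enm.
- exact: root_of_unity_exp_eq lt (esym Enm).
- by rewrite eq_nm eqxx in neq_nm.
Qed.

Lemma eigenvalue_intertwined (p q C : nat) (P : 'M[algC]_p) (Q : 'M[algC]_q)
    (L : 'M[algC]_(p, q)) (lam : algC) :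
  lam != 0 -> ~ is_root_of_unity lam -> P *m L = L *m Q ->
  (forall n, exists (G : 'M_(q, p)) (T : 'M['I_(C.*2.+1)]_p),
      P ^+ n = L *m G + centered_mx T) ->
  eigenvalue P lam -> eigenvalue Q lam.
Proof.
move=> lam0 not_root PL decompP /eigenvalueP [x xP x0].
have [xL0|xL_neq0] := eqVneq (x *m L) 0; last first.
  apply/eigenvalueP; exists (x *m L) => //.
  by rewrite -mulmxA -PL mulmxA xP -scalemxAl.
case: not_root; apply: (bounded_orbit_root_of_unity x0 lam0) => n.
have [G [T EPn]] := decompP n; exists T.
by rewrite -(mulmx_exp_eigen n xP) EPn mulmxDr mulmxA xL0 mul0mx add0r.
Qed.

Lemma eigenvalue_trmx (p : nat) (P : 'M[algC]_p) (lam : algC) :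
  eigenvalue P^T lam = eigenvalue P lam.
Proof.
rewrite /eigenvalue /eigenspace !kermx_eq0 !row_free_unit -unitmx_tr.
by rewrite raddfB /= trmxK tr_scalar_mx.
Qed.

Lemma subst_word_cat (B C : Type) (f : B -> seq C) w1 w2 :
  subst_word f (w1 ++ w2) = subst_word f w1 ++ subst_word f w2.
Proof. by rewrite /subst_word map_cat flatten_cat. Qed.

Lemma subst_word1 (B C : Type) (f : B -> seq C) x : subst_word f [:: x] = f x.
Proof. by rewrite /subst_word /= cats0. Qed.

Lemma iter_subst_word_cat (B : Type) (f : B -> seq B) n w1 w2 :
  iter n (subst_word f) (w1 ++ w2) =
  iter n (subst_word f) w1 ++ iter n (subst_word f) w2.
Proof. by elim: n => //= n ->; rewrite subst_word_cat. Qed.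

Lemma subst_word_iter1 (B : Type) (f : B -> seq B) n w :
  subst_word (fun b => iter n (subst_word f) [:: b]) w = iter n (subst_word f) w.
Proof.
elim: w => [|b w IH]; first by elim: n => //= n <-.
by rewrite -cat1s subst_word_cat iter_subst_word_cat subst_word1 IH.
Qed.

Lemma size_subst_word (B : eqType) (f : B -> seq B) w :
  (forall b, f b != [::]) -> (size w <= size (subst_word f w))%N.
Proof.
move=> f_neq0; elim: w => //= b w IH; rewrite size_cat.
by rewrite -add1n leq_add // lt0n size_eq0.
Qed.

Lemma size_iter_subst_word (B : eqType) (f : B -> seq B) n w :
  (forall b, f b != [::]) -> (size w <= size (iter n (subst_word f) w))%N.
Proof.
by move=> f_neq0; elim: n => //= n IH; exact: leq_trans IH (size_subst_word _ f_neq0).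
Qed.

Lemma count_subst_word (B C : eqType) (f : B -> seq C) w x :
  count_mem x (subst_word f w) = (\sum_(y <- w) count_mem x (f y))%N.
Proof.
elim: w => [|y w IH]; first by rewrite big_nil.
by rewrite count_cat IH big_cons.
Qed.

Lemma sum_count_enum (B : finType) (g : B -> algC) (w : seq B) :
  \sum_(y <- w) g y =
  \sum_(i < #|B|) (count_mem (enum_val i) w)%:R * g (enum_val i).
Proof.
elim: w => [|y w IH]; first by rewrite big_nil big1 // => i _; rewrite mul0r.
rewrite big_cons IH /=.
under [RHS]eq_bigr => i _ do rewrite natrD mulrDl.
rewrite big_split /=; congr (_ + _).
rewrite (bigD1 (enum_rank y)) //= enum_rankK eqxx mul1r big1 ?addr0 //.
move=> i ne_iy; case: eqP => [Ey|]; last by rewrite mul0r.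
by move: ne_iy; rewrite Ey enum_valK eqxx.
Qed.

(* [subst_mx tau] is convertible to [count_mx tau]. *)
Definition count_mx (B C : finType) (f : B -> seq C) : 'M[algC]_(#|C|, #|B|) :=
  \matrix_(i, j) (count_mem (enum_val i) (f (enum_val j)))%:R.

Lemma count_mx_mul (B C D : finType) (f : C -> seq D) (g : B -> seq C) :
  count_mx f *m count_mx g = count_mx (subst_word f \o g).
Proof.
apply/matrixP => i j; rewrite !mxE count_subst_word natr_sum [RHS]sum_count_enum.
by apply: eq_bigr => k _; rewrite !mxE mulrC.
Qed.

Lemma subst_mx_exp (B : finType) (f : B -> seq B) n :
  subst_mx f ^+ n = count_mx (fun b => iter n (subst_word f) [:: b]).
Proof.
elim: n => [|n IH].
  apply/matrixP => i j; rewrite expr0 !mxE /= addn0 eq_sym (inj_eq enum_val_inj).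
  by case: eqP.
rewrite exprSr IH -mulmxE count_mx_mul; apply/matrixP => i j.
by rewrite !mxE /= subst_word_iter1 -[f (enum_val j)]subst_word1 -iterSr.
Qed.

Lemma return_substitution_intertwines (A : finType) (tau : A -> seq A) (N : nat)
    (Theta : 'I_N -> seq A) (tau_u : 'I_N -> seq 'I_N) :
  return_substitution tau Theta tau_u ->
  subst_mx tau *m count_mx Theta = count_mx Theta *m subst_mx tau_u.
Proof.
move=> tau_u_return; rewrite !count_mx_mul; apply/matrixP => i j; rewrite !mxE /=.
by case: (tau_u_return (enum_val j)) => _ ->.
Qed.

Lemma trmx_exp (R : comPzRingType) (m : nat) (B : 'M[R]_m) n : (B^T) ^+ n = (B ^+ n)^T.
Proof.
elim: n => [|n IH]; first by rewrite !expr0 trmx1.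
by rewrite exprSr IH exprS -!mulmxE trmx_mul.
Qed.

Lemma count_le_predU (T : eqType) (P Q R : pred T) (s : seq T) :
  {in s, forall x, P x -> Q x || R x} -> (count P s <= count Q s + count R s)%N.
Proof.
elim: s => //= x s IH PQR.
have /IH {}IH : {in s, forall y, P y -> Q y || R y}.
  by move=> y sy; apply: PQR; rewrite in_cons sy orbT.
have := PQR x (mem_head _ _).
by case: (P x) => [/(_ isT)|_]; case: (Q x); case: (R x) => //=; lia.
Qed.

Lemma leq_sum_addr (d c : nat) (f g : 'I_d -> nat) : (forall t, f t <= g t + c)%N ->
  (\sum_(t < d) f t <= \sum_(t < d) g t + d * c)%N.
Proof.
move=> le_fg; apply: (@leq_trans (\sum_(t < d) (g t + c))%N); first exact: leq_sum.
by rewrite big_split /= big_const_ord iter_addn_0 mulnC.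
Qed.

Section Factors.
Variables (A : eqType) (X : nat -> A).

Lemma pref_factor m : pref X m = factor X 0 m.
Proof. by apply: eq_mkseq => k; rewrite add0n. Qed.

Lemma size_factor i m : size (factor X i m) = m.
Proof. exact: size_mkseq. Qed.

Lemma factorD i m k : factor X i (m + k) = factor X i m ++ factor X (i + m) k.
Proof.
rewrite /factor /mkseq iotaD map_cat; congr (_ ++ _).
have -> : iota (0 + m) k = map (addn m) (iota 0 k) by rewrite -iotaDl addn0.
rewrite -map_comp.
by apply: eq_map => t /=; rewrite addnA.
Qed.

Lemma take_factor i m k : (k <= m)%N -> take k (factor X i m) = factor X i k.
Proof. by move=> km; rewrite -(subnKC km) factorD take_size_cat ?size_factor. Qed.

Lemma factor1 i : factor X i 1 = [:: X i].
Proof. by rewrite /factor /mkseq /= addn0. Qed.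

Lemma nth_factor x0 i m t : (t < m)%N -> nth x0 (factor X i m) t = X (i + t).
Proof. by move=> lt_tm; rewrite nth_mkseq. Qed.

Lemma eq_factor_shift s s' m t k : factor X s m = factor X s' m -> (t + k <= m)%N ->
  factor X (s + t) k = factor X (s' + t) k.
Proof.
move=> Ess' tk; have := congr1 (take (t + k)) Ess'; rewrite !take_factor //.
rewrite !factorD => /eqP; rewrite eqseq_cat ?size_factor // => /andP [_ /eqP] //.
Qed.

End Factors.

Section FixedPoint.
Variables (A : finType) (tau : A -> seq A) (a : A) (X : nat -> A).
Hypothesis tau_neq0 : forall b, tau b != [::].
Hypothesis tau_a : exists w, tau a = a :: w.
Hypothesis tau_primitive : primitive tau.
Hypothesis X_fixed : is_fixed_point tau a X.

Local Notation sw := (subst_word tau).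

Definition iter_len n q := size (iter n sw (pref X q)).

Lemma iter_subst_pref n m : iter n sw (pref X m) = pref X (iter_len n m).
Proof.
elim: n => [|n IH]; first by rewrite /iter_len /= size_mkseq.
by rewrite /iter_len /= IH; case: X_fixed => _; apply.
Qed.

Lemma iter_lenD n q m :
  iter_len n (q + m) = (iter_len n q + size (iter n sw (factor X q m)))%N.
Proof.
by rewrite /iter_len !pref_factor factorD iter_subst_word_cat size_cat add0n.
Qed.

Lemma iter_subst_factor n q m :
  iter n sw (factor X q m) = factor X (iter_len n q) (size (iter n sw (factor X q m))).
Proof.
have := iter_subst_pref n (q + m).
rewrite iter_lenD !pref_factor !factorD !add0n iter_subst_word_cat.
rewrite -pref_factor iter_subst_pref pref_factor => /eqP; rewrite eqseq_cat ?size_factor // => /andP [_ /eqP] //.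
Qed.

Lemma leq_iter_len n q : (q <= iter_len n q)%N.
Proof.
by apply: leq_trans (size_iter_subst_word _ _ tau_neq0); rewrite size_mkseq.
Qed.

Lemma iter_len_leqS n q : (iter_len n q <= iter_len n q.+1)%N.
Proof. by rewrite -addn1 iter_lenD leq_addr. Qed.

Lemma pref1 : pref X 1 = [:: a].
Proof. by rewrite /pref /mkseq /=; case: X_fixed => ->. Qed.

Lemma primitive_mem_iter : exists k, forall x y : A, x \in iter k sw [:: y].
Proof.
case: tau_primitive => k pos_k; exists k => x y.
have := pos_k (enum_rank x) (enum_rank y).
by rewrite subst_mx_exp mxE !enum_rankK ltr0n -has_count has_pred1.
Qed.

Lemma letter_occurs b : exists q, X q == b.
Proof.
have [k mem_k] := primitive_mem_iter; have := mem_k b a.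
by rewrite -pref1 iter_subst_pref => /mapP [q _ ->]; exists q.
Qed.

Definition position b := xchoose (letter_occurs b).

Lemma positionE b : X (position b) = b.
Proof. exact/eqP/(xchooseP (letter_occurs b)). Qed.

Lemma occurs_a_from i : exists2 q, (i <= q)%N & X q = a.
Proof.
have [k mem_k] := primitive_mem_iter; have := mem_k a (X i).
rewrite -factor1 iter_subst_factor => /(nthP a) [t lt_t Xt].
rewrite size_factor in lt_t; rewrite nth_factor // in Xt.
by exists (iter_len k i + t)%N; first exact: leq_trans (leq_iter_len k i) (leq_addr _ _).
Qed.

Lemma letter_eq_a_of_tau_a1 : tau a = [:: a] -> forall x : A, x = a.
Proof.
move=> tau_a1; have [k mem_k] := primitive_mem_iter => x; have := mem_k x a.
suff -> : iter k sw [:: a] = [:: a] by rewrite mem_seq1 => /eqP.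
by elim: k {mem_k} => //= k ->; rewrite subst_word1 tau_a1.
Qed.

Lemma size_iter_a c w : tau a = [:: a, c & w] -> forall p, (p < size (iter p sw [:: a]))%N.
Proof.
move=> tau_acw; elim=> // p IH.
rewrite iterSr subst_word1 tau_acw -cat1s iter_subst_word_cat size_cat -addn1 leq_add //.
exact: leq_trans (size_iter_subst_word _ _ tau_neq0).
Qed.

Section ReturnWords.
Variables (u : seq A) (N : nat) (Theta : 'I_N -> seq A).
Hypothesis u_neq0 : u != [::].
Hypothesis u_pref : u = pref X (size u).
Hypothesis Theta_enum : return_enumeration X u Theta.

Definition occ j := factor X j (size u) == u.

Lemma occ0 : occ 0.
Proof. by rewrite /occ -pref_factor -u_pref. Qed.

Lemma occ_iter_len n q : occ q -> occ (iter_len n q).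
Proof.
rewrite /occ => /eqP occ_q.
have := iter_subst_factor n q (size u); rewrite occ_q => E.
have le_u : (size u <= size (iter n sw u))%N by exact: size_iter_subst_word.
rewrite -(take_factor _ _ le_u) -E [u in iter _ _ u]u_pref iter_subst_pref.
by rewrite pref_factor take_factor -?pref_factor -?u_pref // /iter_len -u_pref.
Qed.

(* The fixed point is uniformly recurrent: [u] occurs as a prefix of
   [tau^|u| (a)], which occurs arbitrarily far in [X]. *)
Lemma occ_from i : exists j, (i < j)%N && occ j.
Proof.
have [[|c w] tau_aw] := tau_a.
  exists i.+1; rewrite ltnSn /occ; apply/eqP; rewrite [RHS]u_pref.
  by apply: eq_mkseq => t; rewrite !(letter_eq_a_of_tau_a1 tau_aw (X _)).
have [q lt_iq Xq] := occurs_a_from i.+1.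
exists (iter_len (size u) q); rewrite (leq_trans lt_iq (leq_iter_len _ _)) /=.
have E := iter_subst_factor (size u) q 1; rewrite factor1 Xq in E.
have le_u : (size u <= size (iter (size u) sw [:: a]))%N.
  exact/ltnW/(size_iter_a tau_aw).
rewrite /occ -(take_factor _ _ le_u) -E -pref1 iter_subst_pref pref_factor take_factor.
  by rewrite -pref_factor -u_pref.
by rewrite /iter_len pref1.
Qed.

Definition next_occ i := ex_minn (occ_from i).

Lemma next_occ_spec i : [/\ (i < next_occ i)%N, occ (next_occ i) &
  forall j, (i < j)%N -> occ j -> (next_occ i <= j)%N].
Proof.
rewrite /next_occ; case: ex_minnP => j /andP [ij oj] min_j; split => // k ik ok.
by apply: min_j; rewrite ik.
Qed.

Lemma next_occ_gt i : (i < next_occ i)%N. Proof. by case: (next_occ_spec i). Qed.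
Lemma occ_next_occ i : occ (next_occ i). Proof. by case: (next_occ_spec i). Qed.

Lemma next_occ_min i j : (i < j)%N -> occ j -> (next_occ i <= j)%N.
Proof. by case: (next_occ_spec i) => _ _; apply. Qed.

Lemma not_occ_before_next i t : (i < t < next_occ i)%N -> ~~ occ t.
Proof.
case/andP=> it tn; apply/negP => ot.
by have := next_occ_min it ot; rewrite leqNgt tn.
Qed.

Lemma next_occ_eq i j : (i < j)%N -> occ j -> (forall t, (i < t < j)%N -> ~~ occ t) ->
  next_occ i = j.
Proof.
move=> ij oj none; apply/eqP; rewrite eqn_leq next_occ_min //=.
rewrite leqNgt; apply/negP => lt; have := none (next_occ i).
by rewrite next_occ_gt lt occ_next_occ => /(_ isT).
Qed.

Lemma return_word_next_occ i : occ i -> exists l, Theta l = factor X i (next_occ i - i).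
Proof.
move=> oi; case: Theta_enum => _ all_ret _ _; apply: all_ret; exists i; split.
  exact/eqP.
exists (next_occ i); split; [exact: next_occ_gt | exact/eqP/occ_next_occ | | by []].
by move=> k /not_occ_before_next /negP not_ok Ek; apply: not_ok; apply/eqP.
Qed.

Lemma return_word_occ l : exists2 i, occ i & Theta l = factor X i (next_occ i - i).
Proof.
case: Theta_enum => ret _ _ _; have [i [oi [j [ij oj none E]]]] := ret l.
exists i; first exact/eqP.
rewrite E (@next_occ_eq i j) //; first exact/eqP.
by move=> t /none not_ot; apply/negP => /eqP.
Qed.

Definition ret_type j l := Theta l == factor X j (next_occ j - j).

Lemma ret_type_inj j l l' : ret_type j l -> ret_type j l' -> l = l'.
Proof.
case: Theta_enum => _ _ Theta_inj _ /eqP E /eqP E'.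
by apply: Theta_inj; rewrite E E'.
Qed.

Definition max_return := (\max_(l : 'I_N) size (Theta l))%N.

Lemma next_occ_sub_le i : occ i -> (next_occ i - i <= max_return)%N.
Proof.
move=> /return_word_next_occ [l E]; rewrite -(size_factor X i (next_occ i - i)) -E.
exact: (leq_bigmax l).
Qed.

Definition ret_count i l := count (fun j => occ j && ret_type j l) (iota 0 i).
Definition ret_count_in s m l :=
  count (fun t => occ (s + t) && ret_type (s + t) l) (iota 0 m).

Lemma ret_countD s m l : ret_count (s + m) l = (ret_count s l + ret_count_in s m l)%N.
Proof.
rewrite /ret_count /ret_count_in iotaD count_cat add0n; congr (_ + _)%N.
by rewrite -[s in iota s _]addn0 iotaDl count_map.
Qed.

Lemma ret_count_in_next o l : occ o -> ret_count_in o (next_occ o - o) l = ret_type o l.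
Proof.
move=> oo; have : (0 < next_occ o - o)%N by rewrite subn_gt0 next_occ_gt.
case E: (next_occ o - o)%N => [|d] // _.
rewrite /ret_count_in /= addn0 oo /= (@eq_in_count _ _ pred0) ?count_pred0 ?addn0 //.
move=> t; rewrite mem_iota /= => /andP [t1 td].
suff /negbTE -> : ~~ occ (o + t) by [].
by apply: (@not_occ_before_next o); apply/andP; split; lia.
Qed.

Lemma occ_le_ex i : exists j, (j <= i)%N && occ j.
Proof. by exists 0%N; rewrite leq0n occ0. Qed.

Definition prev_occ i :=
  ex_maxn (occ_le_ex i) (fun j (le_occ : (j <= i)%N && occ j) => proj1 (andb_prop _ _ le_occ)).

Lemma prev_occ_spec i : [/\ (prev_occ i <= i)%N, occ (prev_occ i) & (i < next_occ (prev_occ i))%N].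
Proof.
rewrite /prev_occ; case: ex_maxnP => j /andP [ji oj] max_j; split => //.
rewrite ltnNge; apply/negP => ni.
by have := max_j _ (introT andP (conj ni (occ_next_occ j))); rewrite leqNgt next_occ_gt.
Qed.

(* A prefix ending at an occurrence of [u] is a concatenation of return words. *)
Lemma count_pref_occ o : occ o -> forall c,
  count_mem c (pref X o) = (\sum_(l : 'I_N) ret_count o l * count_mem c (Theta l))%N.
Proof.
elim/ltn_ind: o => [[|o]] IH oo c.
  by rewrite big1 // => l _; rewrite /ret_count.
have [le_po op lt_o] := prev_occ_spec o; set p := prev_occ o in le_po op lt_o.
have next_p : next_occ p = o.+1.
  by apply/eqP; rewrite eqn_leq lt_o andbT next_occ_min.
rewrite -(subnKC (leqW le_po)) pref_factor factorD add0n -pref_factor.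
rewrite count_cat IH //.
under [in RHS]eq_bigr => l _ do rewrite ret_countD -next_p ret_count_in_next // mulnDl.
rewrite big_split /=; congr (_ + _)%N.
have [l0 E0] := return_word_next_occ op; rewrite next_p in E0.
have typ_l0 : ret_type p l0 by rewrite /ret_type next_p E0.
rewrite -E0 (bigD1 l0) //= typ_l0 mul1n big1 ?addn0 // => l ne_l.
case typ_l: (ret_type p l) => //.
by move: ne_l; rewrite (ret_type_inj typ_l typ_l0) eqxx.
Qed.

Definition pref_rest i c := count_mem c (factor X (prev_occ i) (i - prev_occ i)).

Lemma pref_rest_le i c : (pref_rest i c <= max_return)%N.
Proof.
have [le_pi op lt_i] := prev_occ_spec i.
apply: leq_trans (count_size _ _) _; rewrite size_factor.
by apply: leq_trans (next_occ_sub_le op); lia.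
Qed.

Lemma count_pref i c : (count_mem c (pref X i))%:R =
  \sum_(k < #|'I_N|) (count_mem c (Theta (enum_val k)))%:R *
                    (ret_count (prev_occ i) (enum_val k))%:R + (pref_rest i c)%:R :> algC.
Proof.
have [le_pi op _] := prev_occ_spec i.
rewrite {1}pref_factor -{1}(subnKC le_pi) factorD -pref_factor add0n count_cat.
rewrite count_pref_occ // natrD natr_sum (reindex_onto enum_rank enum_val) /=.
  by congr (_ + _); apply: eq_big => [l|l _]; rewrite ?enum_rankK ?eqxx // natrM mulrC.
by move=> l _; rewrite enum_valK.
Qed.

Lemma count_iter_letter n q c : count_mem c (iter n sw [:: X q]) =
  (count_mem c (pref X (iter_len n q.+1)) - count_mem c (pref X (iter_len n q)))%N.
Proof.
rewrite -addn1 iter_lenD factor1 pref_factor factorD -factor1 -iter_subst_factor.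
by rewrite count_cat -pref_factor addKn.
Qed.

Lemma subst_mx_exp_decomposition n :
  exists (G : 'M[algC]_(#|'I_N|, #|A|)) (T : 'M['I_(max_return.*2.+1)]_#|A|),
    subst_mx tau ^+ n = count_mx Theta *m G + centered_mx T.
Proof.
pose s (j : 'I_#|A|) := iter_len n (position (enum_val j)).
pose e (j : 'I_#|A|) := iter_len n (position (enum_val j)).+1.
exists (\matrix_(k, j) ((ret_count (prev_occ (e j)) (enum_val k))%:R -
                       (ret_count (prev_occ (s j)) (enum_val k))%:R)).
have lt_rest c j :
    (pref_rest (e j) c + max_return - pref_rest (s j) c < max_return.*2.+1)%N.
  by have := pref_rest_le (e j) c; rewrite -addnn; lia.
exists (\matrix_(c, j) Ordinal (lt_rest (enum_val c) j)).
apply/matrixP => c j; rewrite subst_mx_exp !mxE -[enum_val j]positionE.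
have le_se : (count_mem (enum_val c) (pref X (s j)) <= count_mem (enum_val c) (pref X (e j)))%N.
  by rewrite /s /e -addn1 iter_lenD !pref_factor factorD count_cat leq_addr.
rewrite count_iter_letter natrB // -/(s j) -/(e j) !count_pref /=.
rewrite natrB; last exact: leq_trans (pref_rest_le _ _) (leq_addl _ _).
under [X in _ = X + _]eq_bigr => k _ do rewrite !mxE mulrBr.
rewrite sumrB natrD; ring.
Qed.

Lemma occ_of_return_word l s : Theta l = factor X s (size (Theta l)) ->
  occ (s + size (Theta l)) -> occ s /\ next_occ s = (s + size (Theta l))%N.
Proof.
move=> Es os; have [i oi Ei] := return_word_occ l.
have ni := next_occ_gt i.
have size_l : size (Theta l) = (next_occ i - i)%N by rewrite Ei size_factor.
have Esi : factor X s (size (Theta l) + size u) = factor X i (size (Theta l) + size u).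
  rewrite !factorD -Es {2}size_l -Ei; congr (_ ++ _).
  rewrite (eqP os) size_l subnKC ?(ltnW ni) //; exact/esym/eqP/occ_next_occ.
split.
  by rewrite /occ -[s]addn0 (@eq_factor_shift _ X s i _ 0 (size u) Esi) ?addn0 // leq_addl.
apply: next_occ_eq => //; first by rewrite -{1}[s]addn0 ltn_add2l size_l subn_gt0.
move=> t /andP [st ts].
have le_ts : (t - s + size u <= size (Theta l) + size u)%N by lia.
rewrite /occ -(subnKC (ltnW st)) (@eq_factor_shift _ X s i _ _ _ Esi le_ts).
by apply: (@not_occ_before_next i); rewrite size_l in ts; apply/andP; split; lia.
Qed.

Lemma ret_count_concat (w : seq 'I_N) s :
  factor X s (size (subst_word Theta w)) = subst_word Theta w ->
  occ (s + size (subst_word Theta w)) ->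
  occ s /\ forall l,
    ret_count (s + size (subst_word Theta w)) l = (ret_count s l + count_mem l w)%N.
Proof.
elim: w s => [|l1 w IH] s.
  by rewrite /= addn0 => _ os; split => // l; rewrite addn0.
rewrite /= size_cat factorD => /eqP; rewrite eqseq_cat ?size_factor //.
case/andP => /eqP E1 /eqP E2; rewrite addnA => o2.
have [o1 count_w] := IH _ E2 o2.
have [os next_s] := occ_of_return_word (esym E1) o1.
split => // l; rewrite count_w ret_countD.
have -> : size (Theta l1) = (next_occ s - s)%N by rewrite next_s addKn.
rewrite ret_count_in_next // /ret_type next_s addKn E1 /= -addnA; congr (_ + _)%N.
by case: Theta_enum => _ _ Theta_inj _; rewrite (inj_eq Theta_inj) eq_sym.
Qed.

Variable tau_u : 'I_N -> seq 'I_N.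
Hypothesis tau_u_return : return_substitution tau Theta tau_u.

Lemma subst_word_Theta_iter n w :
  subst_word Theta (iter n (subst_word tau_u) w) = iter n sw (subst_word Theta w).
Proof.
have Theta_tau_u v : subst_word Theta (subst_word tau_u v) = sw (subst_word Theta v).
  elim: v => // k v IH; rewrite /= !subst_word_cat IH.
  by case: (tau_u_return k) => _ ->.
by elim: n => //= n IH; rewrite Theta_tau_u IH.
Qed.

Definition img_ret_count n q l :=
  ret_count_in (iter_len n q) (iter_len n q.+1 - iter_len n q) l.

Lemma ret_count_iter_lenD n i d l : ret_count (iter_len n (i + d)) l =
  (ret_count (iter_len n i) l + \sum_(t < d) img_ret_count n (i + t) l)%N.
Proof.
elim: d => [|d IH]; first by rewrite addn0 big_ord0 addn0.
by rewrite big_ord_recr /= addnA -IH addnS -ret_countD subnKC // iter_len_leqS.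
Qed.

Lemma count_iter_return_subst n k l : exists i,
  Theta k = factor X i (size (Theta k)) /\
  count_mem l (iter n (subst_word tau_u) [:: k]) =
    (\sum_(t < size (Theta k)) img_ret_count n (i + t) l)%N.
Proof.
have [i oi E] := return_word_occ k; exists i.
have size_k : size (Theta k) = (next_occ i - i)%N by rewrite E size_factor.
split; first by rewrite size_k -E.
set w := iter n (subst_word tau_u) [:: k].
have Ew : subst_word Theta w = iter n sw (factor X i (size (Theta k))).
  by rewrite subst_word_Theta_iter subst_word1 {1}size_k -E.
have Ef := iter_subst_factor n i (size (Theta k)); rewrite -Ew in Ef.
have Eq := iter_lenD n i (size (Theta k)); rewrite -Ew in Eq.
have oe : occ (iter_len n i + size (subst_word Theta w)).
  rewrite -Eq; apply: occ_iter_len.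
  by rewrite size_k subnKC ?occ_next_occ // ltnW ?next_occ_gt.
have [_ count_w] := ret_count_concat (esym Ef) oe.
by have /eqP := count_w l; rewrite -Eq ret_count_iter_lenD eqn_add2l => /eqP.
Qed.

(* Distinct occurrences in the window [[s, s + m)] have distinct next
   occurrences; those whose return word followed by [u] leaves the window have
   it among the last [|u|] positions. *)
Lemma count_overhanging_le s m :
  (count (fun t => occ (s + t) && (s + m < next_occ (s + t) + size u)%N) (iota 0 m)
   <= size u)%N.
Proof.
rewrite -size_filter; set S := filter _ _.
pose h t := minn (next_occ (s + t)) (s + m).
have memS t : t \in S ->
    [/\ (t < m)%N, occ (s + t) & (s + m < next_occ (s + t) + size u)%N].
  by rewrite mem_filter mem_iota => /andP [/andP [o lt] /andP [_ tm]].
have h_inj : {in S &, injective h}.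
  move=> t1 t2 /memS [m1 o1 b1] /memS [m2 o2 b2] E.
  have := next_occ_gt (s + t1); have := next_occ_gt (s + t2); move: E; rewrite /h.
  case: (ltngtP t1 t2) => // lt.
    by have := @next_occ_min (s + t1) (s + t2) ltac:(lia) o2; lia.
  by have := @next_occ_min (s + t2) (s + t1) ltac:(lia) o1; lia.
have /uniq_leq_size le_S : uniq (map h S).
  by rewrite map_inj_in_uniq // filter_uniq // iota_uniq.
rewrite -(size_map h); apply: leq_trans (le_S (iota (s + m - size u).+1 (size u)) _) _.
  move=> y /mapP [t /memS [tm ot bt] ->]; rewrite mem_iota /h.
  have : (0 < size u)%N by rewrite lt0n size_eq0.
  by have := next_occ_gt (s + t); lia.
by rewrite size_iota.
Qed.

Lemma ret_type_transfer s s' m t l : factor X s m = factor X s' m -> (t < m)%N ->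
  occ (s + t) -> (next_occ (s + t) + size u <= s + m)%N ->
  occ (s' + t) /\ ret_type (s + t) l = ret_type (s' + t) l.
Proof.
move=> Ess' tm ot inside.
have jg := next_occ_gt (s + t); set j := next_occ (s + t) in jg inside *.
have occ_shift x : (x + size u <= m)%N -> occ (s + x) = occ (s' + x).
  by move=> le_x; rewrite /occ (eq_factor_shift Ess' le_x).
have ot' : occ (s' + t) by rewrite -occ_shift //; lia.
have next' : next_occ (s' + t) = (s' + (j - s))%N.
  apply: next_occ_eq; first by lia.
    by rewrite -occ_shift ?subnKC ?occ_next_occ //; lia.
  move=> x /andP [xa xb].
  have : ~~ occ (s + (x - s')) by apply: (@not_occ_before_next (s + t)); lia.
  by rewrite occ_shift ?subnKC //; lia.
split => //; rewrite /ret_type next' -/j.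
have -> : (s' + (j - s) - (s' + t) = j - (s + t))%N by lia.
by rewrite (eq_factor_shift Ess') //; lia.
Qed.

Lemma ret_count_in_eq_factor s s' m l :
  factor X s m = factor X s' m -> (ret_count_in s m l <= ret_count_in s' m l + size u)%N.
Proof.
move=> Ess'; apply: leq_trans (leq_add (leqnn _) (count_overhanging_le s m)).
apply: count_le_predU => t; rewrite mem_iota => /andP [_ tm] /andP [ot typ_t].
case: (leqP (next_occ (s + t) + size u) (s + m)) => inside; last by rewrite ot orbT.
by have [ot' <-] := ret_type_transfer l Ess' tm ot inside; rewrite ot' typ_t.
Qed.

Lemma img_ret_count_letter n q q' l :
  X q = X q' -> (img_ret_count n q l <= img_ret_count n q' l + size u)%N.
Proof.
have size_img q0 : (iter_len n q0.+1 - iter_len n q0)%N = size (iter n sw [:: X q0]).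
  by rewrite -addn1 iter_lenD addKn factor1.
have img q0 : factor X (iter_len n q0) (iter_len n q0.+1 - iter_len n q0) =
              iter n sw [:: X q0].
  by rewrite size_img -factor1 -iter_subst_factor.
move=> Eqq'; rewrite /img_ret_count !size_img -Eqq'; apply: ret_count_in_eq_factor.
by rewrite -[in LHS]size_img img Eqq' -size_img img.
Qed.

Definition img_count_mx n : 'M[algC]_(#|A|, #|'I_N|) :=
  \matrix_(c, l) (img_ret_count n (position (enum_val c)) (enum_val l))%:R.

Definition return_bound := (max_return * size u)%N.

Lemma return_subst_exp_entry n (k l : 'I_#|'I_N|) :
  exists t : 'I_(return_bound.*2.+1),
    ((subst_mx tau_u)^T ^+ n) k l - ((count_mx Theta)^T *m img_count_mx n) k l =
    (t : nat)%:R - return_bound%:R.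
Proof.
have [i [E count_k]] := count_iter_return_subst n (enum_val k) (enum_val l).
set d := size (Theta (enum_val k)) in E count_k.
pose S1 := (\sum_(t < d) img_ret_count n (i + t) (enum_val l))%N.
pose S2 := (\sum_(t < d) img_ret_count n (position (X (i + t))) (enum_val l))%N.
have le_bound : (d * size u <= return_bound)%N.
  by rewrite leq_mul2r (leq_bigmax (enum_val k)) orbT.
have le_S1 : (S1 <= S2 + return_bound)%N.
  apply: leq_trans (leq_add (leqnn S2) le_bound); rewrite /S1 /S2.
  by apply: leq_sum_addr => t; apply: img_ret_count_letter; rewrite positionE.
have le_S2 : (S2 <= S1 + return_bound)%N.
  apply: leq_trans (leq_add (leqnn S1) le_bound); rewrite /S1 /S2.
  by apply: leq_sum_addr => t; apply: img_ret_count_letter; rewrite positionE.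
have lt_t : (S1 + return_bound - S2 < return_bound.*2.+1)%N by rewrite -addnn; lia.
exists (Ordinal lt_t) => /=.
have -> : ((count_mx Theta)^T *m img_count_mx n) k l = S2%:R.
  rewrite !mxE; under eq_bigr => c _ do rewrite !mxE.
  rewrite -(sum_count_enum (fun b => (img_ret_count n (position b) (enum_val l))%:R)).
  rewrite /S2 natr_sum E /factor /mkseq big_map.
  rewrite -(big_mkord xpredT (fun t => (img_ret_count n (position (X (i + t))) (enum_val l))%:R)).
  by rewrite /index_iota subn0.
rewrite trmx_exp mxE subst_mx_exp mxE count_k -/S1 natrB; last by lia.
by rewrite natrD; ring.
Qed.

Lemma return_subst_mx_exp_decomposition n :
  exists (G : 'M[algC]_(#|A|, #|'I_N|)) (T : 'M['I_(return_bound.*2.+1)]_#|'I_N|),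
    (subst_mx tau_u)^T ^+ n = (count_mx Theta)^T *m G + centered_mx T.
Proof.
have entry k l : exists t : 'I_(return_bound.*2.+1),
    ((subst_mx tau_u)^T ^+ n) k l - ((count_mx Theta)^T *m img_count_mx n) k l ==
    (t : nat)%:R - return_bound%:R.
  by have [t Et] := return_subst_exp_entry n k l; exists t; apply/eqP.
exists (img_count_mx n), (\matrix_(k, l) xchoose (entry k l)).
apply/matrixP => k l; rewrite [RHS]mxE [centered_mx _ k l]mxE [(\matrix_(_, _) _) k l]mxE.
by rewrite -(eqP (xchooseP (entry k l))) addrC subrK.
Qed.

End ReturnWords.
End FixedPoint.

Unset Implicit Arguments.

Theorem proposition10 (A : finType) (tau : A -> seq A) (a : A) (X : nat -> A)
  (u : seq A) (N : nat) (Theta : 'I_N -> seq A) (tau_u : 'I_N -> seq 'I_N) :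
  (forall b, tau b != [::]) ->
  (exists w, tau a = a :: w) ->
  primitive tau ->
  is_fixed_point tau a X ->
  u != [::] -> u = pref X (size u) ->
  return_enumeration X u Theta ->
  return_substitution tau Theta tau_u ->
  forall lam : algC, lam != 0 -> ~ is_root_of_unity lam ->
    (eigenvalue (subst_mx tau) lam <-> eigenvalue (subst_mx tau_u) lam).
Proof.
move=> tau_neq0 tau_a tau_primitive X_fixed u_neq0 u_pref Theta_enum tau_u_return.
move=> lam lam_neq0 not_root.
have intertwined := return_substitution_intertwines tau_u_return.
split.
- apply: (eigenvalue_intertwined lam_neq0 not_root intertwined).
  exact: (subst_mx_exp_decomposition tau_neq0 tau_a tau_primitive X_fixed
            u_neq0 u_pref Theta_enum).
- rewrite -eigenvalue_trmx -[eigenvalue (subst_mx tau) lam]eigenvalue_trmx.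
  apply: (@eigenvalue_intertwined _ _ _ _ _ (count_mx Theta)^T _ lam_neq0 not_root).
    by rewrite -!trmx_mul intertwined.
  exact: (return_subst_mx_exp_decomposition tau_neq0 tau_a tau_primitive X_fixed
            u_neq0 u_pref Theta_enum tau_u_return).
Qed.
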